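(* Let $\mathcal{N}=(N,M_0)$ be a two-level PT-net system with transitions partitioned into low-level $L$ and high-level $H$. Then $\mathcal{N}$ has the property SBNDC if and only if for every reachable marking $M_1$ of $\mathcal{N}$ and every $h\in H$, $M_1[h\rangle M_2$ implies $\mathcal{L}(N\setminus H,M_1)=\mathcal{L}(N\setminus H,M_2)$.
   Context: A PT-net is $N=(P,T,F)$ with $P,T$ finite disjoint and $F:(P\times T)\cup(T\times P)\to\mathbb{N}$; markings $M:P\to\mathbb{N}$; $t$ enabled at $M$ ($M[t\rangle$) iff $M(p)\ge F(p,t)$ for all $p$, firing gives $M'(p)=M(p)+F(t,p)-F(p,t)$ ($M[t\rangle M'$); extended to sequences. Reachable markings are those $M$ with $M_0[s\rangle M$. $N\setminus H$ deletes the transitions of $H$. $\mathcal{L}(N\setminus H,M)$ is the set of all $s\in L^*$ with $M[s\rangle$ in $N\setminus H$. Two net systems all of whose transitions are observable are weakly bisimilar if there is a relation $R$ between their reachable markings containing the initial pair such that for $(M,M')\in R$ each step $M[t\rangle M''$ is matched by $M'[t\rangle M'''$ with $(M'',M''')\in R$, and symmetrically. SBNDC: for every reachable marking $M_1$ of $\mathcal{N}$ and every $h\in H$, $M_1[h\rangle M_2$ implies that $(N\setminus H,M_1)$ and $(N\setminus H,M_2)$ are weakly bisimilar. *)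

From mathcomp Require Import all_boot.
Set Implicit Arguments. Unset Strict Implicit. Unset Printing Implicit Defensive.

(* A PT-net N = (P, T, F): P and T are finite types (disjoint since they are
   distinct types); the flow function F is split into
   pre t p = F(p,t) and post t p = F(t,p). *)
Record ptnet (P T : finType) := PTNet {
  pre  : T -> P -> nat ;
  post : T -> P -> nat }.

Definition marking (P : finType) := P -> nat.

Section Firing.
Variables (P T : finType) (N : ptnet P T).

Definition enabled (M : marking P) (t : T) : Prop :=
  forall p, pre N t p <= M p.

Definition fire (M : marking P) (t : T) (M' : marking P) : Prop :=
  enabled M t /\ forall p, M' p = M p + post N t p - pre N t p.

(* M[s> M' in the net restricted to the transitions satisfying [allowed]
   (allowed = predT : the net N itself; allowed = L : the net N \ H). *)
Fixpoint fires (allowed : pred T) (M : marking P) (s : seq T) (M' : marking P)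
  : Prop :=
  match s with
  | [::] => M' = M
  | t :: s' => allowed t /\ exists M1, fire M t M1 /\ fires allowed M1 s' M'
  end.

Definition reach (allowed : pred T) (M M' : marking P) : Prop :=
  exists s, fires allowed M s M'.

End Firing.

Section TwoLevel.
Variables (P T : finType) (N : ptnet P T) (M0 : marking P).
Variable H : pred T.

Definition low : pred T := predC H.

Definition reachable (M : marking P) : Prop := reach N predT M0 M.

Definition lang (M : marking P) : seq T -> Prop :=
  fun s => exists M', fires N low M s M'.

(* (N\H, M1) and (N\H, M2) are weakly bisimilar (all transitions observable):
   a relation between their reachable markings containing (M1, M2) and
   satisfying the transfer property in both directions. *)
Definition weakly_bisimilar (M1 M2 : marking P) : Prop :=
  exists R : marking P -> marking P -> Prop,
    R M1 M2 /\
    (forall M M', R M M' -> reach N low M1 M /\ reach N low M2 M') /\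
    (forall M M', R M M' -> forall t M'', low t -> fire N M t M'' ->
        exists M''', fire N M' t M''' /\ R M'' M''') /\
    (forall M M', R M M' -> forall t M''', low t -> fire N M' t M''' ->
        exists M'', fire N M t M'' /\ R M'' M''').

Definition SBNDC : Prop :=
  forall M1, reachable M1 -> forall h, H h -> forall M2, fire N M1 h M2 ->
    weakly_bisimilar M1 M2.

End TwoLevel.

From mathcomp Require Import all_boot.
From Stdlib Require Import FunctionalExtensionality PropExtensionality.
Set Implicit Arguments. Unset Strict Implicit. Unset Printing Implicit Defensive.

(* Firing is deterministic, so two markings of N \ H with the same language
   are bisimilar via the relation "reached from them by a common word", and
   conversely a bisimulation transfers every firing sequence.  Hence SBNDC
   reduces, marking pair by marking pair, to equality of languages. *)

Section Firing.
Variables (P T : finType) (N : ptnet P T) (allowed : pred T).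

Lemma fire_functional {M A B : marking P} {t} :
  fire N M t A -> fire N M t B -> A = B.
Proof.
move=> [_ eqA] [_ eqB]; apply: functional_extensionality => p.
by rewrite eqA eqB.
Qed.

Lemma fires_functional {s} {M A B : marking P} :
  fires N allowed M s A -> fires N allowed M s B -> A = B.
Proof.
elim: s M => [|t s IHs] M /=; first by move=> -> ->.
move=> [_ [M1 [fire1 fires1]]] [_ [M2 [fire2 fires2]]].
rewrite (fire_functional fire1 fire2) in fires1.
exact: IHs fires1 fires2.
Qed.

Lemma fires_rcons s t (M X : marking P) :
  fires N allowed M (rcons s t) X <->
  exists Y, fires N allowed M s Y /\ allowed t /\ fire N Y t X.
Proof.
elim: s M => [|u s IHs] M /=.
  split=> [[allowed_t [Y [fireY ->]]] | [Y [-> [allowed_t fireY]]]]; first by exists M.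
  by split=> //; exists X.
split=> [[allowed_u [M1 [fire1 /IHs [Y [firesY lastY]]]]] |
          [Y [[allowed_u [M1 [fire1 fires1]]] lastY]]].
  by exists Y; split=> //; split=> //; exists M1.
by split=> //; exists M1; split=> //; apply/IHs; exists Y.
Qed.

Definition simulation (R : marking P -> marking P -> Prop) : Prop :=
  forall M M', R M M' -> forall t M'', allowed t -> fire N M t M'' ->
    exists M''', fire N M' t M''' /\ R M'' M'''.

Lemma simulation_fires R : simulation R ->
  forall s M M' X, R M M' -> fires N allowed M s X ->
    exists X', fires N allowed M' s X'.
Proof.
move=> simR; elim=> [|t s IHs] M M' X RMM' /=; first by exists M'.
move=> [allowed_t [Y [fireY firesY]]].
have [Y' [fireY' RYY']] := simR _ _ RMM' t Y allowed_t fireY.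
have [X' firesX'] := IHs _ _ _ RYY' firesY.
by exists X'; split=> //; exists Y'.
Qed.

Definition common_word (A B M M' : marking P) : Prop :=
  exists s, fires N allowed A s M /\ fires N allowed B s M'.

(* By determinism, the run of [rcons s t] from B passes through M'. *)
Lemma common_word_simulation A B :
  (forall s X, fires N allowed A s X -> exists X', fires N allowed B s X') ->
  simulation (common_word A B).
Proof.
move=> langAB M M' [s [firesA firesB]] t M'' allowed_t fireM.
have firesAt : fires N allowed A (rcons s t) M''.
  by apply/fires_rcons; exists M.
have [X /fires_rcons [Y [firesY [_ fireY]]]] := langAB _ _ firesAt.
rewrite (fires_functional firesY firesB) in fireY.
by exists X; split=> //; exists (rcons s t); split=> //; apply/fires_rcons; exists M'.
Qed.

End Firing.

Lemma weakly_bisimilar_lang (P T : finType) (N : ptnet P T) (H : pred T)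
    (M1 M2 : marking P) :
  weakly_bisimilar N H M1 M2 <-> lang N H M1 = lang N H M2.
Proof.
split.
- move=> [R [R12 [_ [forth back]]]].
  have backR : simulation N (low H) (fun M' M => R M M').
    by move=> M' M RMM' t M''' lt /(back _ _ RMM' t M''' lt) [M'' []]; exists M''.
  apply: functional_extensionality => s; apply: propositional_extensionality.
  split=> [[X] | [X]].
  + exact: simulation_fires forth s M1 M2 X R12.
  + exact: simulation_fires backR s M2 M1 X R12.
- move=> eqL.
  have lang12 s X : fires N (low H) M1 s X -> exists X', fires N (low H) M2 s X'.
    by move=> firesX; have : lang N H M2 s by rewrite -eqL; exists X.
  have lang21 s X : fires N (low H) M2 s X -> exists X', fires N (low H) M1 s X'.
    by move=> firesX; have : lang N H M1 s by rewrite eqL; exists X.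
  exists (common_word N (low H) M1 M2); split; first by exists [::].
  split; first by move=> M M' [s [f1 f2]]; split; [exists s | exists s].
  split; first exact: common_word_simulation.
  move=> M M' [s [f1 f2]] t M''' lt fireM'.
  have [M'' [fireM [s' [g2 g1]]]] :=
    common_word_simulation lang21 (ex_intro _ s (conj f2 f1)) lt fireM'.
  by exists M''; split=> //; exists s'.
Qed.

Theorem proposition5 (P T : finType) (N : ptnet P T) (M0 : marking P)
    (H : pred T) :
  SBNDC N M0 H <->
  (forall M1, reachable N M0 M1 -> forall h, H h -> forall M2,
     fire N M1 h M2 -> lang N H M1 = lang N H M2).
Proof.
split=> [sbndc | eq_lang] M1 reachM1 h Hh M2 fireh; apply/weakly_bisimilar_lang.
- exact: sbndc reachM1 h Hh M2 fireh.
- exact: eq_lang reachM1 h Hh M2 fireh.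
Qed.
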